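(* Let $n\ge1$, $\varepsilon\in D$, $s\in D^n$, and let $\rho^{(j)},\ell_j,\Delta_j,e_j,j',p(j)$ be defined by the recursion below. Then for every $0\le j\le n$: $\rho^{(j)}_0\neq0$, $\deg\rho^{(j)}\le\ell_j$, $(\rho^{(j)},\ell_j)\in\mathrm{Rp}(s^{(j)})$, and $x^{\ell_j-\deg\rho^{(j)}}\big(\rho^{(j)}\big)^{*}\in\mathrm{Min}(s^{(j)})$; in particular $\ell_j=L(s^{(j)})$. Moreover, for $j\ge1$: if $\Delta_j=0$ then $\ell_j=\ell_{j-1}$ and $e_j=e_{j-1}+1$; if $\Delta_j\neq0$ then $\ell_j=\max\{e_{j-1},0\}+\ell_{j-1}=j'+1-\ell_{j'}$ and $e_j=-|e_{j-1}|+1$.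
   Context: Let $D$ be a commutative integral domain with $1\neq 0$. For nonzero $f\in D[x]$, $f^{*}(x)=x^{\deg f}f(x^{-1})$. For $s=(s_1,\dots,s_n)\in D^n$ let $s^{(i)}=(s_1,\dots,s_i)$, $\overline{s}=s_1x+\cdots+s_nx^n$, $\underline{s}=s_1x^{-1}+\cdots+s_nx^{-n}\in D[x,x^{-1}]$, and $F_k$ the coefficient of $x^k$ in a Laurent polynomial $F$. A polynomial $f$ is an annihilator of $s$ if $f=0$ or $d=\deg f\ge0$ and $(f\cdot\underline{s})_{d-j}=0$ for $d+1\le j\le n$; $\mathrm{Min}(s)$ is the set of nonzero annihilators of least degree and $L(s)$ that degree. A reciprocal pair for $s$ is $(g,\ell)$ with $g\in D[x]$, $0\le\ell\le n$, $g_0\neq0$, $\deg g\le\ell$, and $\sum_{k=0}^{\deg g}g_ks_{j-k}=0$ for $\ell+1\le j\le n$; $\mathrm{Rp}(s)$ is the set of these. Recursion (relative to fixed $\varepsilon\in D$): $\rho^{(-1)}=\varepsilon$, $\rho^{(0)}=1$, $\ell_{-1}=\ell_0=0$, $\Delta_0=1$, $0'=-1$, $p(0)=1$, and $e_j=j+1-2\ell_j$ for $j\ge0$. For $j=1,\dots,n$ successively: $\Delta_j=(\rho^{(j-1)}\cdot\overline{s})_j=\sum_{k=0}^{\deg\rho^{(j-1)}}\rho^{(j-1)}_ks_{j-k}$; $j'=(j-1)'$ if $\Delta_j=0$ or $e_{j-1}\le0$, and $j'=j-1$ if $\Delta_j\neq0$ and $e_{j-1}>0$; $p(j)=j-j'$;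 $\Delta'_j=\Delta_{(j-1)'+1}$; $\ell_j=\ell_{j-1}$ if $\Delta_j=0$ or $e_{j-1}\le0$, and $\ell_j=j-\ell_{j-1}$ otherwise; $\rho^{(j)}=\rho^{(j-1)}$ if $\Delta_j=0$, and otherwise $\rho^{(j)}=\Delta'_j\,\rho^{(j-1)}-\Delta_j\,x^{p(j-1)}\rho^{((j-1)')}$. *)

From HB Require Import structures.
From mathcomp Require Import all_boot all_order all_algebra.
From Stdlib Require Import ClassicalEpsilon.
Set Implicit Arguments. Unset Strict Implicit. Unset Printing Implicit Defensive.
Import Order.TTheory GRing.Theory Num.Theory.
Local Open Scope ring_scope.

Section BMDefs.
Variable D : idomainType.

(* s_i for a sequence s = (s_1,...,s_n) stored as a seq with s_i = s`_(i-1);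
   out-of-range index 0 gives 0 (never used in a meaningful way). *)
Definition sidx (s : seq D) (i : nat) : D := if i is i'.+1 then s`_i' else 0.

Definition deg (f : {poly D}) : nat := (size f).-1.

(* reciprocal f^* = x^{deg f} f(x^{-1}) *)
Definition recip (f : {poly D}) : {poly D} := Poly (rev f).

(* f is an annihilator of s: f = 0, or (f * underline s)_{d-j} = 0 for d+1 <= j <= n;
   the coefficient of x^{d-j} in f * underline s is sum_k f_k s_{j-d+k}. *)
Definition annihilator (s : seq D) (f : {poly D}) : Prop :=
  f = 0 \/ forall j : nat, (deg f < j <= size s)%N ->
     \sum_(k < size f) f`_k * sidx s (j - deg f + k) = 0.

Definition isMin (s : seq D) (f : {poly D}) : Prop :=
  [/\ f != 0, annihilator s f &
      forall g : {poly D}, g != 0 -> annihilator s g -> (deg f <= deg g)%N].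

Definition Lpred (s : seq D) : pred nat := fun d =>
  if excluded_middle_informative
       (exists f : {poly D}, [/\ f != 0, annihilator s f & deg f = d])
  then true else false.

Lemma Lpred_ex (s : seq D) : exists d, Lpred s d.
Proof.
exists (size s); rewrite /Lpred; case: excluded_middle_informative => // [[]].
exists 'X^(size s); split.
- by rewrite monic_neq0 // monicXn.
- right=> j /andP[lt le]; exfalso.
  by move: lt; rewrite /deg size_polyXn /= ltnNge le.
- by rewrite /deg size_polyXn.
Qed.

Definition L (s : seq D) : nat := ex_minn (Lpred_ex s).

Definition Rp (s : seq D) (g : {poly D}) (l : nat) : Prop :=
  [/\ (l <= size s)%N, g`_0 != 0, (deg g <= l)%N &
      forall j : nat, (l < j <= size s)%N ->
        \sum_(k < size g) g`_k * sidx s (j - k) = 0].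

Record entry := Entry { e_rho : {poly D}; e_ell : nat; e_jp : int; e_delta : D }.
(* entry for index j stores rho^(j), ell_j, j', Delta_j *)

Variables (eps : D) (s : seq D).

Definition dflt : entry := Entry 0 0 0 0.

(* rho^(k) for k >= -1, read from history h = entries for indices 0..j-1 *)
Definition at_rho (h : seq entry) (k : int) : {poly D} :=
  match k with Posz m => e_rho (nth dflt h m) | Negz _ => eps%:P end.

(* step j (j >= 1), given history h of entries 0..j-1 *)
Definition step (h : seq entry) (j : nat) : entry :=
  let pr := nth dflt h j.-1 in
  let rho1 := e_rho pr in
  let l1 := e_ell pr in
  let jp1 := e_jp pr in
  let del := \sum_(k < size rho1) rho1`_k * sidx s (j - k) in
  let e1 : int := (j%:Z - 1) + 1 - 2 * l1%:Z in
  let jump := (del != 0) && (0 < e1) in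
  let jp : int := if jump then j%:Z - 1 else jp1 in
  let p1 : int := (j%:Z - 1) - jp1 in
  let del' := e_delta (nth dflt h (absz (jp1 + 1))) in
  let l := if jump then (j - l1)%N else l1 in
  let rho := if del == 0 then rho1
             else del' *: rho1 - del *: ('X^(absz p1) * at_rho h jp1) in
  Entry rho l jp del.

Fixpoint hist (j : nat) : seq entry :=
  if j is j'.+1 then let h := hist j' in rcons h (step h j'.+1)
  else [:: Entry 1 0 (-1) 1].

Definition entry_at (j : nat) : entry := nth dflt (hist j) j.

Definition rho (j : nat) : {poly D} := e_rho (entry_at j).
Definition ell (j : nat) : nat := e_ell (entry_at j).
Definition jp (j : nat) : int := e_jp (entry_at j).
Definition delta (j : nat) : D := e_delta (entry_at j).
Definition e (j : nat) : int := j%:Z + 1 - 2 * (ell j)%:Z.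
Definition p (j : nat) : int := j%:Z - jp j.
(* ell_k for an index k >= -1 (ell_{-1} = 0) *)
Definition ellZ (k : int) : nat := match k with Posz m => ell m | Negz _ => 0%N end.

End BMDefs.

(* The recursion keeps (rho^(j), ell_j) a reciprocal pair for s^(j) of least
   possible length.  When Delta_(j+1) <> 0, the update
   Delta' rho^(j) - Delta_(j+1) x^(j-j') rho^(j') reuses the pair saved at the
   last length change j', whose discrepancy Delta' = Delta_(j'+1) cancels the new
   one; the result is a pair of length max(ell_j, j+1-ell_j).  Massey's lemma (a
   pair of length l generating s^(j) but not s_(j+1) forces every pair generating
   s^(j+1) to have length at least j+1-l) shows that this length is optimal.
   Reversing the coefficients of a pair with respect to its length turns it into
   an annihilator of the same degree, so the minimal pair yields an element of
   Min(s^(j)) and ell_j = L(s^(j)); the formulas for ell_j and e_j are then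
   arithmetic. *)

From Pilot Require Import Defs.
From HB Require Import structures.
From mathcomp Require Import all_boot all_order all_algebra zify.
From Stdlib Require Import ClassicalEpsilon.
Import Order.TTheory GRing.Theory Num.Theory.
Local Open Scope ring_scope.
Set Implicit Arguments. Unset Strict Implicit. Unset Printing Implicit Defensive.

Section Polynomials.
Variable D : idomainType.
Implicit Types (c : {poly D}) (a b : D).

Definition revp (d : nat) c : {poly D} := \poly_(k < d.+1) c`_(d - k).

Lemma coef_revp d c k : (revp d c)`_k = if (k <= d)%N then c`_(d - k) else 0.
Proof. by rewrite coef_poly ltnS. Qed.

Lemma revp_coef0 d c : (revp d c)`_0 = c`_d.
Proof. by rewrite coef_revp subn0. Qed.

Lemma size_revp_leq d c : (size (revp d c) <= d.+1)%N.
Proof. exact: size_poly. Qed.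

Lemma size_revp d c : c`_0 != 0 -> size (revp d c) = d.+1.
Proof. by move=> c0; rewrite size_poly_eq // subnn. Qed.

Lemma revpK d c : (size c <= d.+1)%N -> revp d (revp d c) = c.
Proof.
move=> cd; apply/polyP=> k; rewrite !coef_revp.
case: leqP => kd; first by rewrite leq_subr subKn.
by rewrite nth_default // (leq_trans cd).
Qed.

Lemma revp_recip d c : (size c <= d.+1)%N -> 'X^(d - deg c) * recip c = revp d c.
Proof.
move=> cd; apply/polyP=> k; rewrite coefXnM coef_revp /recip coef_Poly /deg.
(* [nth_default] and [nth_rev] reintroduce [size c] through another coercion
   path, which lia would treat as a new atom; hence the refolding into N. *)
set N := size c in cd *; case: ltnP => [k_lt | k_ge].
  by case: ifP => // _; rewrite nth_default // -/N; lia.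
have [m_lt | m_ge] := ltnP (k - (d - N.-1)) N.
  by rewrite nth_rev // -/N ifT; [congr (c`_ _) | ]; lia.
rewrite nth_default ?size_rev -/N //.
by case: ifP => // kd; rewrite nth_default // -/N; lia.
Qed.

Lemma size_update a b c c' m N : (size c <= N)%N -> (m + size c' <= N)%N ->
  (size (a *: c - b *: ('X^m * c'))%R <= N)%N.
Proof.
move=> cN c'N; rewrite (leq_trans (size_polyD _ _)) // size_polyN geq_max.
rewrite !(leq_trans (size_scale_leq _ _)) // (leq_trans (size_polyMleq _ _)) //.
by rewrite size_polyXn addSn.
Qed.

Lemma coef0_update a b c c' m : (0 < m)%N ->
  (a *: c - b *: ('X^m * c'))`_0 = a * c`_0.
Proof. by move=> m_gt0; rewrite coefB !coefZ coefXnM m_gt0 mulr0 subr0. Qed.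

End Polynomials.

Section Discrepancy.
Variables (D : idomainType) (s : seq D).
Implicit Types (c : {poly D}) (a b : D).

Definition disc c (i : nat) : D := \sum_(k < size c) c`_k * sidx s (i - k).

Definition generates c (l j : nat) : Prop := forall i, (l < i <= j)%N -> disc c i = 0.

Lemma discE N c i : (size c <= N)%N -> disc c i = \sum_(k < N) c`_k * sidx s (i - k).
Proof.
move=> cN; rewrite /disc -(subnKC cN) big_split_ord /= [X in _ + X]big1 ?addr0 // => k _.
by rewrite nth_default ?mul0r // leq_addr.
Qed.

Lemma discB a b c c' i : disc (a *: c - b *: c') i = a * disc c i - b * disc c' i.
Proof.
have cN : (size c <= size c + size c')%N := leq_addr _ _.
have c'N : (size c' <= size c + size c')%N := leq_addl _ _.
have N : (size (a *: c - b *: c')%R <= size c + size c')%N.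
  rewrite (leq_trans (size_polyD _ _)) // size_polyN geq_max.
  by rewrite !(leq_trans (size_scale_leq _ _)).
rewrite (discE i N) (discE i cN) (discE i c'N) !mulr_sumr -sumrB.
by apply: eq_bigr => k _; rewrite coefB !coefZ mulrBl !mulrA.
Qed.

Lemma disc_shift m c i : disc ('X^m * c) i = disc c (i - m).
Proof.
have N : (size ('X^m * c)%R <= m + size c)%N.
  by rewrite (leq_trans (size_polyMleq _ _)) // size_polyXn addSn.
rewrite (discE i N) big_split_ord /= big1 ?add0r => [|k _]; last first.
  by rewrite coefXnM ltn_ord mul0r.
by apply: eq_bigr => k _; rewrite coefXnM ltnNge leq_addr /= addKn subnDA.
Qed.

Lemma generates_leq c l l' j : (l <= l')%N -> generates c l j -> generates c l' j.
Proof. by move=> ll' gc i /andP[l'i ij]; apply: gc; rewrite (leq_ltn_trans ll' l'i). Qed.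

Lemma generates_prefix c l j j' : (j' <= j)%N -> generates c l j -> generates c l j'.
Proof. by move=> j'j gc i /andP[li ij']; apply: gc; rewrite li (leq_trans ij'). Qed.

Lemma generatesS c l j : generates c l j -> disc c j.+1 = 0 -> generates c l j.+1.
Proof.
move=> gc dj i /andP[li]; rewrite leq_eqVlt ltnS => /orP[/eqP -> // | ij].
by apply: gc; rewrite li.
Qed.

Lemma generates_update c c' l l' j J : (J < j)%N ->
  generates c l j -> generates c' l' J ->
  generates (disc c' J.+1 *: c - disc c j.+1 *: ('X^(j - J) * c'))
            (maxn l (j - J + l')) j.+1.
Proof.
move=> Jj gc gc' i /andP[]; rewrite gtn_max => /andP[li l'i].
rewrite leq_eqVlt ltnS discB disc_shift => /orP[/eqP -> | ij].
  by rewrite (_ : j.+1 - (j - J) = J.+1)%N; [rewrite mulrC subrr | lia].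
have -> : disc c i = 0 by apply: gc; lia.
have -> : disc c' (i - (j - J)) = 0 by apply: gc'; lia.
by rewrite !mulr0 subrr.
Qed.

(* Summing c'_k c_m s_(j+1-k-m) over both indices gives c'_0 * disc c (j+1)
   by rows and 0 by columns. *)
Lemma massey c c' l l' j : (size c <= l.+1)%N -> (size c' <= l'.+1)%N ->
  c'`_0 != 0 -> generates c l j -> disc c j.+1 != 0 -> generates c' l' j.+1 ->
  (j.+1 <= l + l')%N.
Proof.
move=> cl c'l' c'0 gc dj gc'; rewrite leqNgt; apply/negP => short.
pose S := \sum_(k < l'.+1) \sum_(m < l.+1) c'`_k * (c`_m * sidx s (j.+1 - k - m)).
have S_rows : S = c'`_0 * disc c j.+1.
  rewrite /S big_ord_recl /= subn0 -mulr_sumr -(discE _ cl).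
  rewrite big1 ?addr0 // => k _; rewrite -mulr_sumr -(discE _ cl) gc ?mulr0 //.
  by have := ltn_ord k; rewrite /bump; lia.
have S_cols : S = 0.
  rewrite /S exchange_big big1 // => m _ /=.
  rewrite (_ : \sum_(k < l'.+1) _ = c`_m * disc c' (j.+1 - m)); last first.
    by rewrite (discE _ c'l') mulr_sumr; apply: eq_bigr => k _; rewrite mulrCA subnAC.
  by rewrite gc' ?mulr0 //; have := ltn_ord m; lia.
by move: (mulf_neq0 c'0 dj); rewrite -S_rows S_cols eqxx.
Qed.

End Discrepancy.

Lemma disc_take (D : idomainType) (s : seq D) j c i :
  (i <= j)%N -> disc (take j s) c i = disc s c i.
Proof.
move=> ij; apply: eq_bigr => k _; congr (_ * _).
by case: (i - k)%N (leq_subr k i) => //= m mi; rewrite nth_take // (leq_trans mi ij).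
Qed.

Lemma generates_take (D : idomainType) (s : seq D) c l j :
  generates (take j s) c l j <-> generates s c l j.
Proof.
split=> gc i /andP[li ij].
  by rewrite -(disc_take s c ij); apply: gc; rewrite li.
by rewrite (disc_take s c ij); apply: gc; rewrite li.
Qed.

Section MinimalAnnihilators.
Variables (D : idomainType) (t : seq D).
Implicit Types (c f g : {poly D}).

Lemma disc_revp d f i : (d <= i)%N ->
  disc t (revp d f) i = \sum_(k < d.+1) f`_k * sidx t (i - d + k).
Proof.
move=> di; rewrite (discE t i (size_revp_leq d f)) (reindex_inj rev_ord_inj) /=.
apply: eq_bigr => k _; have kd : (k <= d)%N by rewrite -ltnS.
by rewrite coef_revp subSS leq_subr subKn //; congr (_ * sidx t _); lia.
Qed.

Lemma annihilatorE f : f != 0 ->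
  annihilator t f <-> generates t (revp (deg f) f) (deg f) (size t).
Proof.
move=> fnz; have sf : size f = (deg f).+1 by rewrite /deg prednK // size_poly_gt0.
split.
  case=> [f0 | af i /andP[di it]]; first by move: fnz; rewrite f0 eqxx.
  by rewrite disc_revp 1?ltnW // -sf; apply: af; rewrite di.
move=> gf; right=> i /andP[di it]; rewrite sf -disc_revp 1?ltnW //.
by apply: gf; rewrite di.
Qed.

Lemma isMin_revp c l : c`_0 != 0 -> (size c <= l.+1)%N -> generates t c l (size t) ->
  (forall g d, g`_0 != 0 -> (size g <= d.+1)%N -> generates t g d (size t) -> (l <= d)%N) ->
  isMin t (revp l c).
Proof.
move=> c0 cl gc lmin; have sF := size_revp l c0.
have dF : deg (revp l c) = l by rewrite /deg sF.
have Fnz : revp l c != 0 by rewrite -size_poly_eq0 sF.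
split=> //; first by apply/annihilatorE => //; rewrite dF revpK.
move=> g gnz /(annihilatorE gnz) gg; rewrite dF; apply: lmin gg; last exact: size_revp_leq.
by rewrite revp_coef0 /deg -lead_coefE lead_coef_eq0.
Qed.

Lemma L_isMin f : isMin t f -> L t = deg f.
Proof.
case=> fnz fann fmin; rewrite /L; case: ex_minnP => m Lm mmin.
apply/eqP; rewrite eqn_leq; apply/andP; split.
  by apply: mmin; rewrite /Lpred; case: excluded_middle_informative => // [[]]; exists f.
move: Lm; rewrite /Lpred; case: excluded_middle_informative => // [[g [gnz gann gm]]] _.
by rewrite -gm; exact: fmin.
Qed.

End MinimalAnnihilators.

Section BerlekampMassey.
Variables (D : idomainType) (eps : D) (s : seq D).

Notation hist := (hist eps s).
Notation entry_at := (entry_at eps s).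
Notation rho := (rho eps s).
Notation ell := (ell eps s).
Notation jp := (jp eps s).
Notation delta := (delta eps s).
Notation e := (e eps s).

Lemma size_hist j : size (hist j) = j.+1.
Proof. by elim: j => //= j IH; rewrite size_rcons IH. Qed.

Lemma nth_hist j k : (k <= j)%N -> nth (dflt D) (hist j) k = entry_at k.
Proof.
elim: j => [|j IH]; first by rewrite leqn0 => /eqP ->.
rewrite leq_eqVlt => /orP[/eqP -> // | kj].
by rewrite /= nth_rcons size_hist kj IH.
Qed.

Lemma entry_atS j : entry_at j.+1 = step eps s (hist j) j.+1.
Proof. by rewrite /Defs.entry_at /= nth_rcons size_hist ltnn eqxx. Qed.

Definition length_jump j := (delta j.+1 != 0) && (0 < e j).

Lemma length_jumpE j : length_jump j = (delta j.+1 != 0) && (2 * ell j <= j)%N.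
Proof. by rewrite /length_jump /Defs.e; congr (_ && _); apply/idP/idP; lia. Qed.

Lemma delta_S j : delta j.+1 = disc s (rho j) j.+1.
Proof. by rewrite /Defs.delta entry_atS. Qed.

Lemma jp_S j : jp j.+1 = if length_jump j then Posz j else jp j.
Proof. by rewrite /Defs.jp entry_atS /= -predn_int // /length_jump delta_S. Qed.

Lemma ell_S j : ell j.+1 = if length_jump j then (j.+1 - ell j)%N else ell j.
Proof. by rewrite /Defs.ell entry_atS /= -predn_int // /length_jump delta_S. Qed.

Lemma ell_S_neq0 j : delta j.+1 != 0 -> ell j.+1 = maxn (ell j) (j.+1 - ell j).
Proof. by move=> dn; rewrite ell_S length_jumpE dn /=; case: leqP; lia. Qed.

Lemma ell_le j : (ell j <= j)%N.
Proof. by elim: j => // j IH; rewrite ell_S; case: ifP; lia. Qed.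

Lemma jp_cases j : jp j = -1 \/ exists2 J, jp j = Posz J & (J < j)%N.
Proof.
elim: j => [|j [jm | [J jJ Jj]]]; first by left.
- by rewrite jp_S; case: ifP => _; [right; exists j | left].
- by rewrite jp_S; right; case: ifP => _; [exists j | exists J => //; apply: ltnW].
Qed.

Lemma ell_jp j : (ell j)%:Z = jp j + 1 - (ellZ eps s (jp j))%:Z.
Proof.
elim: j => // j IH; rewrite ell_S jp_S; case: ifP => // _ /=.
by have := ell_le j; lia.
Qed.

Lemma delta_jp_neq0 j J : jp j = Posz J -> delta J.+1 != 0.
Proof.
elim: j => // j IH; rewrite jp_S; case: ifP => [/andP[dn _] [<-] // | _].
exact: IH.
Qed.

Lemma rho_S j : rho j.+1 =
  if delta j.+1 == 0 then rho j
  else e_delta (nth (dflt D) (hist j) (absz (jp j + 1))) *: rho j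
       - delta j.+1 *: ('X^(absz (j%:Z - jp j)) * at_rho eps (hist j) (jp j)).
Proof. by rewrite {1}/Defs.rho entry_atS /= -predn_int // delta_S. Qed.

Lemma rho_S_eq0 j : delta j.+1 = 0 -> rho j.+1 = rho j.
Proof. by move=> dz; rewrite rho_S dz eqxx. Qed.

Lemma rho_S_neg1 j : jp j = -1 -> delta j.+1 != 0 ->
  rho j.+1 = rho j - delta j.+1 *: ('X^(j.+1) * eps%:P).
Proof. by move=> jm dn; rewrite rho_S (negbTE dn) jm /= nth_hist // scale1r addn1. Qed.

Lemma rho_S_pos j J : jp j = Posz J -> (J < j)%N -> delta j.+1 != 0 ->
  rho j.+1 = delta J.+1 *: rho j - delta j.+1 *: ('X^(j - J) * rho J).
Proof.
move=> jJ Jj dn; rewrite rho_S (negbTE dn) jJ /= subzn ?(ltnW Jj) //=.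
by rewrite !nth_hist ?addn1 // ltnW.
Qed.

Definition rho_spec j :=
  [/\ (rho j)`_0 != 0, (size (rho j) <= (ell j).+1)%N & generates s (rho j) (ell j) j].

Lemma rho_specS j : (forall k, (k <= j)%N -> rho_spec k) -> rho_spec j.+1.
Proof.
move=> IH; have [r0 rs rg] := IH j (leqnn j).
have [dz | dn] := eqVneq (delta j.+1) 0.
  rewrite /rho_spec rho_S_eq0 // ell_S /length_jump dz eqxx /=; split=> //.
  by apply: generatesS; rewrite -?delta_S.
have lS := ell_S_neq0 dn; have lj := ell_jp j.
case: (jp_cases j) => [jm | [J jJ Jj]].
  rewrite jm /= in lj; rewrite /rho_spec (rho_S_neg1 jm dn) lS -[rho j]scale1r; split.
  - by rewrite coef0_update // mul1r.
  - by apply: size_update; [apply: leq_trans rs _ | rewrite size_polyC]; lia.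
  - by move=> i /andP[li ij]; lia.
have [J0 JsJ Jg] := IH J (ltnW Jj); rewrite jJ /= in lj.
rewrite /rho_spec (rho_S_pos jJ Jj dn) lS; split.
- by rewrite coef0_update ?subn_gt0 // mulf_neq0 // (delta_jp_neq0 jJ).
- by apply: size_update; lia.
- rewrite !delta_S; apply: generates_leq (generates_update Jj rg Jg).
  by have := ell_le J; lia.
Qed.

Lemma rho_specP j : rho_spec j.
Proof.
elim/ltn_ind: j => -[|j] IH; last by apply: rho_specS => k kj; apply: IH.
rewrite /rho_spec /Defs.rho /=; split.
- by rewrite coef1 oner_neq0.
- by rewrite size_poly1.
- by move=> [|i]; rewrite ?ltn0 //= andbF.
Qed.

Lemma ell_min j (c : {poly D}) d : c`_0 != 0 -> (size c <= d.+1)%N -> generates s c d j ->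
  (ell j <= d)%N.
Proof.
elim: j => // j IH c0 cd gc; have ld := IH c0 cd (generates_prefix (leqnSn j) gc).
rewrite ell_S; case: ifP => // /andP[dn _].
have [_ rs rg] := rho_specP j; rewrite delta_S in dn.
by have := massey rs cd c0 rg dn gc; lia.
Qed.

Lemma rho_reciprocal_pair j : (j <= size s)%N ->
  [/\ (rho j)`_0 != 0, (deg (rho j) <= ell j)%N, Rp (take j s) (rho j) (ell j),
      isMin (take j s) ('X^(ell j - deg (rho j)) * recip (rho j)) & ell j = L (take j s)].
Proof.
move=> js; have [r0 rs rg] := rho_specP j.
have tj : size (take j s) = j by rewrite size_takel.
have gt : generates (take j s) (rho j) (ell j) (size (take j s)).
  by rewrite tj generates_take.
have hmin : isMin (take j s) (revp (ell j) (rho j)).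
  apply: isMin_revp r0 rs gt _ => c d c0 cd.
  by rewrite tj generates_take; apply: ell_min.
have dr : (deg (rho j) <= ell j)%N by rewrite /deg; lia.
rewrite revp_recip //; split=> //.
  by split=> //; rewrite tj ell_le.
by rewrite (L_isMin hmin) /deg size_revp.
Qed.

Lemma ell_e_S j :
  (delta j.+1 = 0 -> ell j.+1 = ell j /\ e j.+1 = e j + 1) /\
  (delta j.+1 != 0 ->
     [/\ (ell j.+1)%:Z = Num.max (e j) 0 + (ell j)%:Z,
         (ell j.+1)%:Z = jp j.+1 + 1 - (ellZ eps s (jp j.+1))%:Z
       & e j.+1 = - `|e j| + 1]).
Proof.
split=> [dz | dn].
  have lS : ell j.+1 = ell j by rewrite ell_S /length_jump dz eqxx.
  by rewrite /Defs.e lS; split=> //; lia.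
have lS := ell_S_neq0 dn.
by split; [rewrite /Defs.e lS; lia | exact: ell_jp | rewrite /Defs.e lS; lia].
Qed.

End BerlekampMassey.

Theorem mainTheorem10 (D : idomainType) (n : nat) (eps : D) (s : seq D) :
  (1 <= n)%N -> size s = n ->
  (forall j : nat, (j <= n)%N ->
     [/\ (rho eps s j)`_0 != 0,
         (deg (rho eps s j) <= ell eps s j)%N,
         Rp (take j s) (rho eps s j) (ell eps s j),
         isMin (take j s) ('X^(ell eps s j - deg (rho eps s j)) * recip (rho eps s j))
       & ell eps s j = L (take j s)]) /\
  (forall j : nat, (1 <= j <= n)%N ->
     (delta eps s j = 0 ->
        ell eps s j = ell eps s j.-1 /\ e eps s j = e eps s j.-1 + 1) /\
     (delta eps s j != 0 ->
        [/\ (ell eps s j)%:Z = Num.max (e eps s j.-1) 0 + (ell eps s j.-1)%:Z,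
            (ell eps s j)%:Z = jp eps s j + 1 - (ellZ eps s (jp eps s j))%:Z
          & e eps s j = - `|e eps s j.-1| + 1])).
Proof.
move=> _ <-; split=> [j | [|j] //= _]; [exact: rho_reciprocal_pair | exact: ell_e_S].
Qed.
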